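(* Let $\Lambda$ be a $k$-graph with no sources, $S$ a semigroup, $\eta:\Lambda\to S$ a functor and $\Lambda\times_\eta S$ the associated skew product graph. Then the system $(\Lambda,S,\eta)$ is cofinal if and only if $\Lambda\times_\eta S$ is cofinal.
   Context: All semigroups are countable, cancellative, with identity. A $k$-graph is a countable category $\Lambda$ with a functor $d:\Lambda\to\mathbb{N}^k$ with unique factorisation; $\Lambda^n=d^{-1}(n)$, $\Lambda^0$ = vertices, $uXv=\{\lambda\in X:r(\lambda)=u,s(\lambda)=v\}$; no sources: $v\Lambda^n\ne\emptyset$ for $n\ne0$. The skew product $\Lambda\times_\eta S$ has vertices $\Lambda^0\times S$, morphisms $\Lambda\times S$, $r(\lambda,t)=(r(\lambda),t)$, $s(\lambda,t)=(s(\lambda),t\eta(\lambda))$, $(\lambda,t)(\mu,t\eta(\lambda))=(\lambda\mu,t)$, $d(\lambda,t)=d(\lambda)$. A $k$-graph $\Gamma$ is cofinal if for all $v,w\in\Gamma^0$ there is $N\in\mathbb{N}^k$ with $v\Gamma s(\alpha)\ne\emptyset$ for all $\alpha\in w\Gamma^N$. The system $(\Lambda,S,\eta)$ is cofinal if for all $v,w\in\Lambda^0$ and $a,b\in S$ there is $N\in\mathbb{N}^k$ such that for all $\alpha\in w\Lambda^N$ there is $\beta\in v\Lambda s(\alpha)$ with $a\eta(\beta)=b\eta(\alpha)$. *)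

From mathcomp Require Import all_boot.
From Stdlib Require Import FunctionalExtensionality.

Set Implicit Arguments.
Unset Strict Implicit.
Unset Printing Implicit Defensive.

Definition Nk (k : nat) := 'I_k -> nat.
Definition Nk0 {k : nat} : Nk k := fun _ => 0.
Definition Nkadd {k : nat} (m n : Nk k) : Nk k := fun i => m i + n i.

Definition countable_type (T : Type) : Prop :=
  exists f : T -> nat, forall x y, f x = f y -> x = y.

(* The composite
   [comp f g] is the composite "f g" (f after g), meaningful when
   [src f = rng g]; vertices are the objects (identified with the identity
   morphisms, i.e. Lambda^0 = d^{-1}(0)). *)
Record kgraph_data (k : nat) := KGraphData {
  Obj : Type;
  Mor : Type;
  rng : Mor -> Obj;
  src : Mor -> Obj;
  idm : Obj -> Mor;
  comp : Mor -> Mor -> Mor;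
  deg : Mor -> Nk k
}.

Arguments rng {k G} _ : rename.
Arguments src {k G} _ : rename.
Arguments idm {k G} _ : rename.
Arguments comp {k G} _ _ : rename.
Arguments deg {k G} _ : rename.

Definition is_kgraph {k : nat} (G : kgraph_data k) : Prop :=
  countable_type (Obj G) /\ countable_type (Mor G) /\
  (forall v : Obj G, rng (idm v) = v /\ src (idm v) = v) /\
  (forall f : Mor G, comp (idm (rng f)) f = f /\ comp f (idm (src f)) = f) /\
  (forall f g : Mor G, src f = rng g ->
      rng (comp f g) = rng f /\ src (comp f g) = src g) /\
  (forall f g h : Mor G, src f = rng g -> src g = rng h ->
      comp f (comp g h) = comp (comp f g) h) /\
  (forall v : Obj G, deg (idm v) = Nk0) /\
  (forall f g : Mor G, src f = rng g -> deg (comp f g) = Nkadd (deg f) (deg g)) /\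
  (forall (l : Mor G) (m n : Nk k), deg l = Nkadd m n ->
     exists mu nu : Mor G,
       (src mu = rng nu /\ l = comp mu nu /\ deg mu = m /\ deg nu = n) /\
       (forall mu' nu' : Mor G,
          src mu' = rng nu' /\ l = comp mu' nu' /\ deg mu' = m /\ deg nu' = n ->
          mu' = mu /\ nu' = nu)).

Definition no_sources {k : nat} (G : kgraph_data k) : Prop :=
  forall (v : Obj G) (n : Nk k), n <> Nk0 ->
    exists l : Mor G, rng l = v /\ deg l = n.

Definition kgraph_cofinal {k : nat} (G : kgraph_data k) : Prop :=
  forall v w : Obj G, exists N : Nk k,
    forall alpha : Mor G, rng alpha = w -> deg alpha = N ->
      exists beta : Mor G, rng beta = v /\ src beta = src alpha.

Record semigroup_data := SemigroupData {
  scar : Type;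
  sop : scar -> scar -> scar;
  sunit : scar
}.

Arguments sop {S} _ _ : rename.
Arguments sunit {S} : rename.

Definition is_semigroup (S : semigroup_data) : Prop :=
  countable_type (scar S) /\
  (forall a b c : scar S, sop a (sop b c) = sop (sop a b) c) /\
  (forall a : scar S, sop sunit a = a /\ sop a sunit = a) /\
  (forall a b c : scar S, sop a b = sop a c -> b = c) /\
  (forall a b c : scar S, sop b a = sop c a -> b = c).

(* a functor Lambda -> S, S viewed as a one-object category *)
Definition is_functor {k : nat} (G : kgraph_data k) (S : semigroup_data)
  (eta : Mor G -> scar S) : Prop :=
  (forall v : Obj G, eta (idm v) = sunit) /\
  (forall f g : Mor G, src f = rng g -> eta (comp f g) = sop (eta f) (eta g)).

Definition skew_product {k : nat} (G : kgraph_data k) (S : semigroup_data)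
  (eta : Mor G -> scar S) : kgraph_data k :=
  @KGraphData k (Obj G * scar S)%type (Mor G * scar S)%type
    (fun p => (rng p.1, p.2))
    (fun p => (src p.1, sop p.2 (eta p.1)))
    (fun x => (idm x.1, x.2))
    (fun p q => (comp p.1 q.1, p.2))
    (fun p => deg p.1).

Definition system_cofinal {k : nat} (G : kgraph_data k) (S : semigroup_data)
  (eta : Mor G -> scar S) : Prop :=
  forall (v w : Obj G) (a b : scar S), exists N : Nk k,
    forall alpha : Mor G, rng alpha = w -> deg alpha = N ->
      exists beta : Mor G,
        rng beta = v /\ src beta = src alpha /\ sop a (eta beta) = sop b (eta alpha).

Arguments is_functor {k} G S eta.
Arguments skew_product {k} G S eta.
Arguments system_cofinal {k} G S eta.

From mathcomp Require Import all_boot.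

(* In the skew product, a path [(alpha, b)] with range [(w, b)] has source
   [(src alpha, b eta(alpha))], and a path [(beta, a)] with range [(v, a)] has
   the same source exactly when [src beta = src alpha] and
   [a eta(beta) = b eta(alpha)].  So the two cofinality conditions coincide,
   and none of the k-graph, semigroup or functor axioms is needed. *)

Section SkewProductCofinality.

Variables (k : nat) (G : kgraph_data k) (S : semigroup_data).
Variable eta : Mor G -> scar S.

Lemma skew_product_cofinal_of_system :
  system_cofinal G S eta -> kgraph_cofinal (skew_product G S eta).
Proof.
move=> cofG [v a] [w b].
have [N HN] := cofG v w a b.
exists N => -[alpha c] /= [r_alpha ->{c}] d_alpha.
have [beta [r_beta [s_beta eta_beta]]] := HN alpha r_alpha d_alpha.
by exists (beta, a); rewrite /= r_beta s_beta eta_beta.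
Qed.

Lemma system_cofinal_of_skew_product :
  kgraph_cofinal (skew_product G S eta) -> system_cofinal G S eta.
Proof.
move=> cofGS v w a b.
have [N HN] := cofGS (v, a) (w, b).
exists N => alpha r_alpha d_alpha.
have [[beta c] /= [[r_beta ->] [s_beta eta_beta]]] :=
  HN (alpha, b) (congr1 (pair^~ b) r_alpha) d_alpha.
by exists beta.
Qed.

End SkewProductCofinality.

Theorem proposition4p11 (k : nat) (G : kgraph_data k) (S : semigroup_data)
  (eta : Mor G -> scar S)
  (HG : is_kgraph G) (Hns : no_sources G) (HS : is_semigroup S)
  (Heta : is_functor G S eta) :
  system_cofinal G S eta <-> kgraph_cofinal (skew_product G S eta).
Proof.
split; [exact: skew_product_cofinal_of_system | exact: system_cofinal_of_skew_product].
Qed.
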